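(* $\displaystyle\lim_{n\to\infty}\frac{l(4n+2)}{l(4n+1)}=\frac{17}{5}.$
   Context: For $n\ge 0$, $c(n)=\sum_{i=0}^{n}\left(\binom{n}{i}\bmod 2\right)2^{i}$, the integer whose binary digits form the $n$-th row of Pascal's triangle modulo $2$; one has $c(2n)\equiv1\pmod4$, and $l(n)=\frac{c(2n)-1}{4}$. (Stated in the paper as a conjecture of R. Stephan and proved there.) *)

From mathcomp Require Import all_boot all_order all_algebra.
From mathcomp Require Import all_classical all_reals all_analysis.
Set Implicit Arguments. Unset Strict Implicit. Unset Printing Implicit Defensive.

Definition c (n : nat) : nat := \sum_(i < n.+1) ('C(n, i) %% 2) * 2 ^ i.

(* l(n) = (c(2n) - 1) / 4  (exact, since c(2n) = 1 mod 4) *)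
Definition l (n : nat) : nat := (c (2 * n) - 1) %/ 4.

From mathcomp Require Import all_boot all_order all_algebra.
From mathcomp Require Import all_classical all_reals all_analysis.
From mathcomp Require Import zify ring lra.

(* Over GF(2), (1 + X)^(2m) = (1 + X^2)^m.  Reading a row of Pascal's triangle
   mod 2 in base b, this gives P_b(2m) = P_(b^2)(m) and
   P_b(2m+1) = (1 + b) P_(b^2)(m), where c = P_2.  Hence
   c(2(4n+2)) = 17 P_256(n) and c(2(4n+1)) = 5 P_256(n), so the ratio is
   (17p - 1)/(5p - 1) with p = P_256(n) >= 256^n, which tends to 17/5. *)

Lemma binSS_double m k :
  'C(m.*2.+2, k.+2) = 'C(m.*2, k.+2) + ('C(m.*2, k.+1)).*2 + 'C(m.*2, k).
Proof. rewrite !binS -addnn; lia. Qed.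

Lemma odd_bin_double m k : odd 'C(m.*2, k) = ~~ odd k && odd 'C(m, k./2).
Proof.
elim: m k => [|m IHm] [|[|k]]; rewrite ?bin0 ?andbT //.
- by rewrite !bin0n andbF.
- by rewrite bin1 odd_double.
rewrite -[k.+2./2]/(k./2.+1) [in RHS]binS doubleS binSS_double.
by rewrite !oddD odd_double addbF !IHm !oddS negbK; case: (odd k).
Qed.

Lemma odd_bin_doubleS m k : odd 'C(m.*2.+1, k) = odd 'C(m, k./2).
Proof.
case: k => [|k]; first by rewrite !bin0.
rewrite binS oddD !odd_bin_double /= uphalf_half.
by case: (odd k); rewrite ?addbF.
Qed.

Lemma big_ord_double (F : nat -> nat) n :
  \sum_(i < n.*2) F i = \sum_(i < n) (F i.*2 + F i.*2.+1).
Proof.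
elim: n => [|n IHn]; first by rewrite !big_ord0.
by rewrite doubleS !big_ord_recr /= IHn addnA.
Qed.

Definition pascal_row (b n : nat) : nat := \sum_(i < n.+1) ('C(n, i) %% 2) * b ^ i.

Lemma c_pascal_row n : c n = pascal_row 2 n.
Proof. by []. Qed.

Lemma pascal_row_widen b n N :
  n < N -> \sum_(i < N) ('C(n, i) %% 2) * b ^ i = pascal_row b n.
Proof.
move=> ltnN; rewrite /pascal_row.
rewrite (big_ord_widen N (fun i => 'C(n, i) %% 2 * b ^ i) ltnN) [RHS]big_mkcond /=.
apply: eq_bigr => i _; case: ltnP => // lt_n_i.
by rewrite bin_small.
Qed.

Lemma pascal_row_double b m : pascal_row b m.*2 = pascal_row (b ^ 2) m.
Proof.
rewrite -(@pascal_row_widen b m.*2 m.+1.*2); last by rewrite doubleS.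
rewrite (big_ord_double (fun i => 'C(m.*2, i) %% 2 * b ^ i)).
apply: eq_bigr => i _.
rewrite !modn2 !odd_bin_double oddS odd_double half_double /= -mul2n expnM.
by rewrite addn0.
Qed.

Lemma pascal_row_doubleS b m : pascal_row b m.*2.+1 = (1 + b) * pascal_row (b ^ 2) m.
Proof.
rewrite -(@pascal_row_widen b m.*2.+1 m.+1.*2); last by rewrite doubleS.
rewrite (big_ord_double (fun i => 'C(m.*2.+1, i) %% 2 * b ^ i)).
rewrite big_distrr; apply: eq_bigr => i _.
rewrite !modn2 !odd_bin_doubleS half_double -[(i.*2.+1)./2]/(uphalf i.*2).
rewrite uphalf_double expnS -mul2n expnM.
by rewrite /= mulnDl mul1n mulnCA.
Qed.

Lemma pascal_row_mod b n : pascal_row b n = 1 %[mod b].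
Proof.
rewrite /pascal_row big_ord_recl bin0 mul1n expn0 -modnDmr.
suff /eqP-> : b %| \sum_(i < n) ('C(n, lift ord0 i) %% 2) * b ^ lift ord0 i by [].
by apply: dvdn_sum => i _; rewrite lift0 dvdn_mull // dvdn_exp.
Qed.

Lemma leq_expn_pascal_row b n : b ^ n <= pascal_row b n.
Proof. by rewrite /pascal_row big_ord_recr /= binn mul1n leq_addl. Qed.

Lemma c_double k : c (2 * k) = pascal_row 4 k.
Proof. by rewrite mul2n c_pascal_row pascal_row_double. Qed.

Lemma c_double_mod4 k : c (2 * k) = 1 %[mod 4].
Proof. by rewrite c_double pascal_row_mod. Qed.

Lemma c_double_4n2 n : c (2 * (4 * n + 2)) = 17 * pascal_row 256 n.
Proof.
have -> : 4 * n + 2 = (n.*2.+1).*2 by rewrite -!mul2n; lia.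
by rewrite c_double pascal_row_double pascal_row_doubleS.
Qed.

Lemma c_double_4n1 n : c (2 * (4 * n + 1)) = 5 * pascal_row 256 n.
Proof.
have -> : 4 * n + 1 = (n.*2.*2.+1) by rewrite -!mul2n; lia.
by rewrite c_double pascal_row_doubleS pascal_row_double.
Qed.

Import Order.TTheory GRing.Theory Num.Theory.
Import numFieldNormedType.Exports.
Local Open Scope classical_set_scope.
Local Open Scope ring_scope.

Lemma natr_l (R : numFieldType) k : (l k)%:R = ((c (2 * k))%:R - 1) / 4 :> R.
Proof.
have c_gt0 : (0 < c (2 * k))%N.
  by rewrite c_double (leq_trans _ (leq_expn_pascal_row _ _)) ?expn_gt0.
have dvd4 : (4 %| c (2 * k) - 1)%N by rewrite -eqn_mod_dvd // c_double_mod4.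
by rewrite /l natr_div ?natrB // unitfE pnatr_eq0.
Qed.

Lemma l_ratio_bounds (R : realFieldType) n :
  17 / 5 <= ((l (4 * n + 2))%:R / (l (4 * n + 1))%:R : R) <= 17 / 5 + n.+1%:R^-1.
Proof.
rewrite !natr_l c_double_4n2 c_double_4n1 !natrM.
have le_np : (n.+1 <= pascal_row 256 n)%N.
  exact: leq_trans (ltn_expl _ _) (leq_expn_pascal_row _ _).
have : n.+1%:R <= (pascal_row 256 n)%:R :> R by rewrite ler_nat.
have : 0 <= n%:R :> R by [].
rewrite -natr1; move: (n%:R) ((pascal_row 256 n)%:R) => x p x_ge0 le_xp.
have p_ge1 : 1 <= p by lra.
have -> : (17%:R * p - 1) / 4 / ((5%:R * p - 1) / 4) = 17 / 5 + 12 / (5 * (5 * p - 1)).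
  by field; lra.
rewrite lerDl divr_ge0 ?lerD2l //=; last by lra.
rewrite ler_pdivrMr; last by lra.
by rewrite mulrC -[X in _ <= X]/(5 * (5 * p - 1) / (x + 1)) ler_pdivlMr; lra.
Qed.

Theorem mainTheorem11 (R : realType) :
  (fun n : nat => ((l (4 * n + 2))%:R / (l (4 * n + 1))%:R : R)) @ \oo
    --> (17%:R / 5%:R : R).
Proof.
apply: (@squeeze_cvgr _ _ _ R (fun=> 17 / 5) (fun n => 17 / 5 + harmonic n)).
- exact: nearW (l_ratio_bounds R).
- exact: cvg_cst.
- rewrite -[X in _ --> X]addr0; apply: cvgD; first exact: cvg_cst.
  exact: cvg_harmonic.
Qed.
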